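(* Let $\mathcal H_S$ and $\mathcal H_A$ be finite-dimensional Hilbert spaces, let $\rho_{SA}$ be a density matrix on $\mathcal H_S\otimes\mathcal H_A$, and let $\{|r_k\rangle\}$ be an orthonormal basis of $\mathcal H_S$. Suppose that for every orthonormal basis $\{|a\rangle\}$ of $\mathcal H_A$ and every outcome $a$ with $p_a>0$, the conditional state $\rho_{S|a}$ is diagonal in the basis $\{|r_k\rangle\}$. Then $$\rho_{SA}=\sum_k|r_k\rangle\langle r_k|\otimes C^A_k$$ for some positive semidefinite operators $C^A_k$ on $\mathcal H_A$.
   Context: For an orthonormal basis $\{|a\rangle\}$ of $\mathcal H_A$ with projectors $\Pi^A_a=|a\rangle\langle a|$: $p_a=\mathrm{Tr}[(I^S\otimes\Pi^A_a)\rho_{SA}]$ and, when $p_a>0$, $\rho_{S|a}=\mathrm{Tr}_A[(I^S\otimes\Pi^A_a)\rho_{SA}(I^S\otimes\Pi^A_a)]/p_a$. *)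

(* Complex scalars: an arbitrary numClosedFieldType C
   (e.g. algC, or complex R for a real closed / real field R). *)
From mathcomp Require Import all_boot all_order all_algebra.
From mathcomp Require Export mxtens.
Set Implicit Arguments. Unset Strict Implicit. Unset Printing Implicit Defensive.
Import Order.TTheory GRing.Theory Num.Theory.
Local Open Scope ring_scope.

Section QDefs.
Variable C : numClosedFieldType.

Definition adjmx {m n} (A : 'M[C]_(m, n)) : 'M[C]_(n, m) :=
  (map_mx (fun z : C => z^*) A)^T.

Definition psd {n} (A : 'M[C]_n) : Prop :=
  adjmx A = A /\ forall v : 'cV[C]_n, 0 <= (adjmx v *m A *m v) 0 0.

Definition density {n} (rho : 'M[C]_n) : Prop := psd rho /\ \tr rho = 1.

(* the columns of U form an orthonormal basis of C^n *)
Definition unitary {n} (U : 'M[C]_n) : Prop := adjmx U *m U = 1%:M.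

Definition projb {n} (U : 'M[C]_n) (a : 'I_n) : 'M[C]_n :=
  col a U *m adjmx (col a U).

(* partial trace over the second tensor factor (H_S ⊗ H_A -> H_S),
   compatible with the ordering of tensmx *)
Definition ptraceA {m n} (M : 'M[C]_(m * n)) : 'M[C]_m :=
  \matrix_(i, j) \sum_(b < n) M (mxtens_index (i, b)) (mxtens_index (j, b)).

Definition liftA m {n} (U : 'M[C]_n) (a : 'I_n) : 'M[C]_(m * n) :=
  tensmx (1%:M : 'M[C]_m) (projb U a).

Definition prob_a {m n} (rho : 'M[C]_(m * n)) (U : 'M[C]_n) (a : 'I_n) : C :=
  \tr (liftA m U a *m rho).

Definition cond_state {m n} (rho : 'M[C]_(m * n)) (U : 'M[C]_n) (a : 'I_n)
  : 'M[C]_m :=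
  (prob_a rho U a)^-1 *: ptraceA (liftA m U a *m rho *m liftA m U a).

Definition diag_in {m} (R : 'M[C]_m) (sigma : 'M[C]_m) : Prop :=
  is_diag_mx (adjmx R *m sigma *m R).

End QDefs.

(* Put [W_k = r_k ⊗ I] and [B_kl = W_k^† rho W_l]; since [Σ_k W_k W_k^† = I],
   [rho = Σ_{k,l} W_k B_kl W_l^†].  Measuring [A] in a basis containing the unit
   vector [u] leaves on [S] the operator [p_a rho_{S|a} = V_u^† rho V_u], where
   [V_u x = x ⊗ u], and its [(k,l)] entry in the basis [(r_k)] is [<u, B_kl u>].
   For [k <> l] the hypothesis makes this entry vanish; when [p_a = 0] the whole
   positive operator vanishes, its trace being [p_a].  The unit vectors
   [(e_x + c e_y)/√2] are columns of Householder reflections, so polarisation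
   gives [B_kl = 0] for [k <> l], hence [rho = Σ_k |r_k><r_k| ⊗ B_kk] with
   [B_kk = W_k^† rho W_k] positive. *)

From mathcomp Require Import all_boot all_order all_algebra.
From mathcomp Require Import mxtens ring.
Set Implicit Arguments.
Unset Strict Implicit.
Unset Printing Implicit Defensive.
Import Order.TTheory GRing.Theory Num.Theory.
Local Open Scope ring_scope.

Lemma sum_delta_l {R : pzSemiRingType} n (x : 'I_n) (F : 'I_n -> R) :
  \sum_i ((x == i)%:R * F i) = F x.
Proof.
rewrite (bigD1 x) //= eqxx mul1r big1 ?addr0 // => i /negbTE.
by rewrite eq_sym => ->; rewrite mul0r.
Qed.

Lemma sum_delta_r {R : pzSemiRingType} n (x : 'I_n) (F : 'I_n -> R) :
  \sum_i (F i * (i == x)%:R) = F x.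
Proof.
rewrite (bigD1 x) //= eqxx mulr1 big1 ?addr0 // => i /negbTE ->.
by rewrite mulr0.
Qed.

Lemma sum_block_diag {R : pzSemiRingType} p q s
    (X : 'I_s -> 'M[R]_(p, q)) (Y : 'I_s -> 'M[R]_(q, p)) (A : 'M[R]_p) :
  \sum_k X k *m Y k = 1%:M -> (forall k l, k != l -> Y k *m A *m X l = 0) ->
  A = \sum_k X k *m (Y k *m A *m X k) *m Y k.
Proof.
move=> XY1 offdiag0.
transitivity ((\sum_k X k *m Y k) *m A *m (\sum_k X k *m Y k)).
  by rewrite XY1 mul1mx mulmx1.
rewrite !mulmx_suml; apply: eq_bigr => k _.
rewrite mulmx_sumr (bigD1 k) //= big1 ?addr0 => [|l lk]; first by rewrite !mulmxA.
have -> : X k *m Y k *m A *m (X l *m Y l) = X k *m (Y k *m A *m X l) *m Y l.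
  by rewrite !mulmxA.
by rewrite offdiag0 1?eq_sym // mulmx0 mul0mx.
Qed.

Lemma tensmx_suml {R : pzRingType} m n p q s (A : 'I_s -> 'M[R]_(m, n)) (B : 'M[R]_(p, q)) :
  (\sum_k A k) *t B = \sum_k A k *t B.
Proof.
apply/matrixP=> I J; rewrite !mxE !summxE big_distrl /=.
by apply: eq_bigr => k _; rewrite mxE.
Qed.

Lemma tensmx1 {R : pzRingType} m n : (1%:M : 'M[R]_m) *t (1%:M : 'M[R]_n) = 1%:M.
Proof.
apply/matrixP=> I J.
case: (mxtens_indexP I) => i b; case: (mxtens_indexP J) => j d.
by rewrite tensmxE !mxE (can_eq (@mxtens_indexK m n)) xpair_eqE -natrM mulnb.
Qed.

Section ConditionalStates.
Variable C : numClosedFieldType.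

Lemma adjmxE m n (A : 'M[C]_(m, n)) i j : adjmx A i j = (A j i)^*.
Proof. by rewrite !mxE. Qed.

Lemma adjmxK m n (A : 'M[C]_(m, n)) : adjmx (adjmx A) = A.
Proof. by apply/matrixP=> i j; rewrite !adjmxE conjCK. Qed.

Lemma adjmxM m n p (A : 'M[C]_(m, n)) (B : 'M[C]_(n, p)) :
  adjmx (A *m B) = adjmx B *m adjmx A.
Proof. by rewrite /adjmx map_mxM trmx_mul. Qed.

Lemma adjmxD m n (A B : 'M[C]_(m, n)) : adjmx (A + B) = adjmx A + adjmx B.
Proof. by rewrite /adjmx map_mxD linearD. Qed.

Lemma adjmxN m n (A : 'M[C]_(m, n)) : adjmx (- A) = - adjmx A.
Proof. by rewrite /adjmx map_mxN linearN. Qed.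

Lemma adjmxZ m n (c : C) (A : 'M[C]_(m, n)) : adjmx (c *: A) = c^* *: adjmx A.
Proof. by rewrite /adjmx map_mxZ linearZ. Qed.

Lemma adjmx_scalar n (c : C) : adjmx (c%:M : 'M[C]_n) = c^*%:M.
Proof. by rewrite /adjmx map_scalar_mx tr_scalar_mx. Qed.

Lemma adjmx_delta m n (i : 'I_m) (j : 'I_n) :
  adjmx (delta_mx i j : 'M[C]_(m, n)) = delta_mx j i.
Proof. by rewrite /adjmx map_delta_mx trmx_delta. Qed.

Definition sform {n} (A : 'M[C]_n) (v w : 'cV[C]_n) : C := (adjmx v *m A *m w) 0 0.

Lemma sformDl n (A : 'M[C]_n) v1 v2 w : sform A (v1 + v2) w = sform A v1 w + sform A v2 w.
Proof. by rewrite /sform adjmxD !mulmxDl mxE. Qed.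

Lemma sformDr n (A : 'M[C]_n) v w1 w2 : sform A v (w1 + w2) = sform A v w1 + sform A v w2.
Proof. by rewrite /sform !mulmxDr mxE. Qed.

Lemma sformZl n (A : 'M[C]_n) c v w : sform A (c *: v) w = c^* * sform A v w.
Proof. by rewrite /sform adjmxZ -!scalemxAl mxE. Qed.

Lemma sformZr n (A : 'M[C]_n) c v w : sform A v (c *: w) = c * sform A v w.
Proof. by rewrite /sform -!scalemxAr mxE. Qed.

Lemma sform_delta n (A : 'M[C]_n) i j : sform A (delta_mx i 0) (delta_mx j 0) = A i j.
Proof. by rewrite /sform adjmx_delta -rowE -colE !mxE. Qed.

Lemma sform_mul p q (A : 'M[C]_p) (X Y : 'M[C]_(p, q)) v w :
  sform A (X *m v) (Y *m w) = sform (adjmx X *m A *m Y) v w.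
Proof. by rewrite /sform adjmxM !mulmxA. Qed.

Lemma mul_adjmx_entry p q (A : 'M[C]_p) (X Y : 'M[C]_(p, q)) k l :
  (adjmx X *m A *m Y) k l = sform A (col k X) (col l Y).
Proof. by rewrite !colE sform_mul sform_delta. Qed.

Lemma sform_delta2 n (A : 'M[C]_n) k l (t : C) :
  sform A (delta_mx k 0 + t *: delta_mx l 0) (delta_mx k 0 + t *: delta_mx l 0) =
  A k k + t * A k l + t^* * A l k + t^* * t * A l l.
Proof. by rewrite !sformDl !sformDr !sformZl !sformZr !sform_delta !addrA mulrA. Qed.

Lemma psd_congr p q (A : 'M[C]_p) (X : 'M[C]_(p, q)) :
  psd A -> psd (adjmx X *m A *m X).
Proof.
case=> A_herm A_ge0; split=> [|v]; first by rewrite !adjmxM adjmxK A_herm mulmxA.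
by have := A_ge0 (X *m v); rewrite adjmxM !mulmxA.
Qed.

Lemma psd_diag_ge0 n (A : 'M[C]_n) k : psd A -> 0 <= A k k.
Proof. by case=> _ /(_ (delta_mx k 0)); rewrite -/(sform A _ _) sform_delta. Qed.

Lemma psd_trace_ge0 n (A : 'M[C]_n) : psd A -> 0 <= \tr A.
Proof. by move=> A_psd; apply: sumr_ge0 => k _; exact: psd_diag_ge0. Qed.

Lemma psd_trace_eq0 n (A : 'M[C]_n) : psd A -> \tr A = 0 -> A = 0.
Proof.
move=> A_psd trA0.
have diag0 k : A k k = 0.
  by move: trA0; rewrite /mxtrace => /psumr_eq0P -> // i _; exact: psd_diag_ge0.
apply/matrixP=> k l; rewrite mxE; set x := A k l.
have A_lk : A l k = x^* by rewrite -(proj1 A_psd) adjmxE.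
(* with [t = - x^*] the form at [e_k + t e_l] equals [- 2 x x^*] *)
have := (proj2 A_psd) (delta_mx k 0 + (- x^*) *: delta_mx l 0).
rewrite -/(sform A _ _) sform_delta2 !diag0 A_lk rmorphN /= conjCK.
rewrite -/x mulr0 addr0 add0r !mulNr [x^* * x]mulrC -opprD oppr_ge0 => xx_le0.
have xx_ge0 : 0 <= x * x^* by exact: mul_conjC_ge0.
have xx0 : x * x^* = 0.
  by apply/eqP; rewrite eq_le xx_ge0 andbT (le_trans _ xx_le0) ?lerDl.
by apply/eqP; rewrite -mul_conjC_eq0 xx0.
Qed.

Lemma unitary1 n : unitary (1%:M : 'M[C]_n).
Proof. by rewrite /unitary adjmx_scalar rmorph1 mul1mx. Qed.

Lemma reflection_unitary n (w : 'cV[C]_n) (b : C) :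
  b^* = b -> b *: (adjmx w *m w) = 2%:M -> unitary (1%:M - b *: (w *m adjmx w)).
Proof.
move=> b_real b_ww; set P := w *m adjmx w.
have P_herm : adjmx P = P by rewrite adjmxM adjmxK.
have PP : b *: (P *m P) = 2%:R *: P.
  have -> : P *m P = w *m (adjmx w *m w) *m adjmx w by rewrite /P !mulmxA.
  by rewrite scalemxAl scalemxAr b_ww mul_mx_scalar -scalemxAl.
rewrite /unitary adjmxD adjmxN adjmxZ P_herm adjmx_scalar rmorph1 b_real.
rewrite mulmxBl !mulmxBr !mul1mx mulmx1 -scalemxAl -scalemxAr PP scalerA.
by rewrite mulr_natr -scalerMnl mulr2n opprB addrK subrK.
Qed.

Lemma householder_col n (v : 'cV[C]_n) x :
  adjmx v *m v = 1%:M -> (v x 0)^* = v x 0 -> v x 0 != 1 ->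
  exists2 U : 'M[C]_n, unitary U & col x U = v.
Proof.
move=> v_unit vx_real vx_ne1; set e : 'cV[C]_n := delta_mx x 0; set w := e - v.
have ee : adjmx e *m e = 1%:M.
  by rewrite adjmx_delta mul_delta_mx; apply/matrixP=> i j; rewrite !ord1 !mxE.
have ev : adjmx e *m v = (v x 0)%:M by rewrite [LHS]mx11_scalar adjmx_delta -rowE !mxE.
have ve : adjmx v *m e = (v x 0)%:M.
  by rewrite -[e]adjmxK -adjmxM ev adjmx_scalar vx_real.
have we : adjmx w *m e = (1 - v x 0)%:M.
  by rewrite adjmxD adjmxN mulmxDl mulNmx ee ve raddfB.
have ww : adjmx w *m w = ((1 - v x 0) *+ 2)%:M.
  rewrite mulmxDr mulmxN we adjmxD adjmxN mulmxDl mulNmx ev v_unit.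
  by rewrite -!raddfB; congr (_%:M); ring.
have vx1_neq0 : 1 - v x 0 != 0 by rewrite subr_eq0 eq_sym.
(* the reflection in [e - v] exchanges [e] and [v] *)
exists (1%:M - (1 - v x 0)^-1 *: (w *m adjmx w)).
  apply: reflection_unitary; first by rewrite fmorphV rmorphB /= rmorph1 vx_real.
  by rewrite ww scale_scalar_mx mulrnAr mulVf.
rewrite colE -/e mulmxBl mul1mx -scalemxAl -mulmxA we mul_mx_scalar scalerA.
by rewrite mulVf // scale1r opprB addrC subrK.
Qed.

Lemma unit_pair_col n (x y : 'I_n) (c : C) : x != y -> c^* * c = 1 ->
  exists2 U : 'M[C]_n, unitary U &
    col x U = sqrtC 2^-1 *: (delta_mx x 0 + c *: delta_mx y 0).
Proof.
move=> xy c_unit; set s := sqrtC 2^-1.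
have s_real : s^* = s by apply: geC0_conj; rewrite sqrtC_ge0 invr_ge0 ler0n.
have ss : s * s = 2^-1 by rewrite -expr2 sqrtCK.
have vx : (s *: (delta_mx x 0 + c *: delta_mx y 0) : 'cV[C]_n) x 0 = s.
  by rewrite !mxE !eqxx (negbTE xy) /= mulr0 addr0 mulr1.
apply: householder_col; rewrite ?vx //.
  rewrite [LHS]mx11_scalar -(mulmx1 (adjmx _)) -/(sform 1%:M _ _) sformZl sformZr.
  rewrite sform_delta2 !mxE !eqxx (negbTE xy) eq_sym (negbTE xy) /=.
  by rewrite !mulr0 !addr0 !mulr1 c_unit s_real mulrA ss mulVf ?pnatr_eq0.
apply/eqP => s1; move: ss; rewrite s1 mulr1 => /eqP.
by rewrite eq_sym invr_eq1 pnatr_eq1.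
Qed.

Lemma basis_sform_eq0 n (N : 'M[C]_n) :
  (forall U a, unitary U -> sform N (col a U) (col a U) = 0) -> N = 0.
Proof.
move=> N0.
have diag0 a : N a a = 0 by have := N0 _ a (unitary1 n); rewrite colE mul1mx sform_delta.
have pair0 x y c : x != y -> c^* * c = 1 -> c * N x y + c^* * N y x = 0.
  move=> xy c_unit; have [U U_unitary Ux] := unit_pair_col xy c_unit.
  have := N0 U x U_unitary; rewrite Ux sformZl sformZr sform_delta2 !diag0.
  rewrite mulr0 addr0 add0r => /eqP; rewrite !mulf_eq0 conjC_eq0 sqrtC_eq0.
  by rewrite invr_eq0 pnatr_eq0 => /eqP.
apply/matrixP=> x y; rewrite mxE; have [->|xy] := eqVneq x y; first exact: diag0.
have := pair0 x y 1 xy; rewrite rmorph1 !mul1r => /(_ erefl)/eqP.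
rewrite addrC addr_eq0 => /eqP Nyx.
have i_unit : 'i^* * 'i = 1 :> C by rewrite conjCi mulNr -expr2 sqrCi opprK.
have := pair0 x y 'i xy i_unit; rewrite conjCi Nyx mulrNN -mulr2n => /eqP.
by rewrite mulrn_eq0 mulf_eq0 (negbTE (neq0Ci C)) /= => /eqP.
Qed.

(* [tens_vecr u] is the isometry [x |-> x ⊗ u] and [tens_vecl r] is [y |-> r ⊗ y]. *)
Definition tens_vecr {m n} (u : 'cV[C]_n) : 'M[C]_(m * n, m) :=
  \matrix_(I, i) (((mxtens_unindex I).1 == i)%:R * u (mxtens_unindex I).2 0).

Definition tens_vecl {m n} (r : 'cV[C]_m) : 'M[C]_(m * n, n) :=
  \matrix_(I, b) (r (mxtens_unindex I).1 0 * ((mxtens_unindex I).2 == b)%:R).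

Lemma tens_vecrC m n (u : 'cV[C]_n) (r : 'cV[C]_m) :
  tens_vecr u *m r = tens_vecl r *m u.
Proof.
apply/matrixP=> I z; rewrite !mxE.
under eq_bigr => i _ do rewrite mxE mulrAC.
under [RHS]eq_bigr => b _ do rewrite mxE -mulrA.
by rewrite -big_distrl /= sum_delta_l -big_distrr /= sum_delta_l [z]ord1.
Qed.

Lemma tens_vecr_outer m n (u : 'cV[C]_n) :
  tens_vecr u *m adjmx (tens_vecr u) = (1%:M : 'M[C]_m) *t (u *m adjmx u).
Proof.
apply/matrixP=> I J; rewrite !mxE big_ord1.
under eq_bigr => i _ do rewrite !mxE rmorphM rmorph_nat mulrACA.
by rewrite -big_distrl /= sum_delta_l !mxE eq_sym.
Qed.

Lemma tens_vecl_conj m n (r : 'cV[C]_m) (B : 'M[C]_n) :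
  tens_vecl r *m B *m adjmx (tens_vecl r) = (r *m adjmx r) *t B.
Proof.
apply/matrixP=> I J; rewrite !mxE big_ord1 !mxE.
under eq_bigr => b _ do rewrite !mxE rmorphM rmorph_nat.
under eq_bigr => b _ do (under eq_bigr => c _ do rewrite mxE -mulrA).
under eq_bigr => b _ do rewrite -big_distrr /= sum_delta_l mulrA eq_sym.
by rewrite sum_delta_r mulrAC.
Qed.

Lemma ptraceA_conj_tens_vecr m n (u : 'cV[C]_n) (X : 'M[C]_m) :
  adjmx u *m u = 1%:M -> ptraceA (tens_vecr u *m X *m adjmx (tens_vecr u)) = X.
Proof.
move=> u_unit; have u_norm : \sum_b u b 0 * (u b 0)^* = 1.
  have := congr1 (fun M : 'M_1 => M 0 0) u_unit; rewrite /= !mxE eqxx mulr1n => <-.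
  by apply: eq_bigr => b _; rewrite adjmxE mulrC.
apply/matrixP=> i j; rewrite mxE -[RHS]mul1r -u_norm big_distrl /=.
apply: eq_bigr => b _; rewrite !mxE.
under eq_bigr => k _ do rewrite !mxE !mxtens_indexK rmorphM rmorph_nat.
under eq_bigr => k _ do (under eq_bigr => l _ do rewrite mxE mxtens_indexK -mulrA).
under eq_bigr => k _ do rewrite sum_delta_l mulrCA.
by rewrite sum_delta_l mulrAC.
Qed.

Lemma sum_col_outer m n (R : 'M[C]_(m, n)) :
  \sum_k col k R *m adjmx (col k R) = R *m adjmx R.
Proof.
apply/matrixP=> i j; rewrite summxE mxE.
by apply: eq_bigr => k _; rewrite mxE big_ord1 !mxE.
Qed.

Lemma sum_tens_vecl_outer m n (R : 'M[C]_m) : R *m adjmx R = 1%:M ->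
  \sum_k tens_vecl (col k R) *m adjmx (tens_vecl (col k R)) = 1%:M :> 'M[C]_(m * n).
Proof.
move=> R_coisometry.
under eq_bigr => k _ do rewrite -[X in X *m adjmx _]mulmx1 tens_vecl_conj.
by rewrite -tensmx_suml sum_col_outer R_coisometry tensmx1.
Qed.

Lemma unitary_col_unit n (U : 'M[C]_n) a :
  unitary U -> adjmx (col a U) *m col a U = 1%:M.
Proof.
move=> U_unitary; rewrite !colE adjmxM -mulmxA (mulmxA (adjmx U)) U_unitary mul1mx.
by rewrite adjmx_delta mul_delta_mx; apply/matrixP=> i j; rewrite !ord1 !mxE.
Qed.

Definition cond_op m n (rho : 'M[C]_(m * n)) (u : 'cV[C]_n) : 'M[C]_m :=
  adjmx (tens_vecr u) *m rho *m tens_vecr u.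

Lemma liftA_tens_vecr m n (U : 'M[C]_n) a :
  liftA m U a = tens_vecr (col a U) *m adjmx (tens_vecr (col a U)).
Proof. by rewrite tens_vecr_outer. Qed.

Lemma prob_aE m n (rho : 'M[C]_(m * n)) (U : 'M[C]_n) a :
  prob_a rho U a = \tr (cond_op rho (col a U)).
Proof. by rewrite /prob_a liftA_tens_vecr -mulmxA mxtrace_mulC. Qed.

Lemma cond_stateE m n (rho : 'M[C]_(m * n)) (U : 'M[C]_n) a : unitary U ->
  cond_state rho U a = (prob_a rho U a)^-1 *: cond_op rho (col a U).
Proof.
move=> U_unitary; rewrite /cond_state liftA_tens_vecr; set V := tens_vecr _.
have -> : V *m adjmx V *m rho *m (V *m adjmx V) = V *m cond_op rho (col a U) *m adjmx V.
  by rewrite /cond_op !mulmxA.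
by rewrite ptraceA_conj_tens_vecr // unitary_col_unit.
Qed.

Lemma cond_op_entry m n (rho : 'M[C]_(m * n)) (R : 'M[C]_m) u k l :
  (adjmx R *m cond_op rho u *m R) k l =
  sform (adjmx (tens_vecl (col k R)) *m rho *m tens_vecl (col l R)) u u.
Proof.
have -> : adjmx R *m cond_op rho u *m R =
          adjmx (tens_vecr u *m R) *m rho *m (tens_vecr u *m R).
  by rewrite /cond_op adjmxM !mulmxA.
by rewrite mul_adjmx_entry !colE -!(mulmxA (tens_vecr u)) -!colE !tens_vecrC sform_mul.
Qed.

Lemma cond_diag_block_eq0 m n (rho : 'M[C]_(m * n)) (R : 'M[C]_m) k l :
  psd rho ->
  (forall U, unitary U -> forall a, 0 < prob_a rho U a ->
     diag_in R (cond_state rho U a)) ->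
  k != l -> adjmx (tens_vecl (col k R)) *m rho *m tens_vecl (col l R) = 0.
Proof.
move=> rho_psd cond_diag kl; apply: basis_sform_eq0 => U a U_unitary.
rewrite -cond_op_entry; set Q := cond_op rho (col a U).
have Q_psd : psd Q by exact: psd_congr.
have [p_gt0|p_ngt0] := boolP (0 < prob_a rho U a).
  have := cond_diag U U_unitary a p_gt0.
  rewrite /diag_in cond_stateE // -scalemxAr -scalemxAl => /is_diag_mxP/(_ k l kl).
  by rewrite mxE => /eqP; rewrite mulf_eq0 invr_eq0 (gt_eqF p_gt0) => /eqP.
have trQ0 : \tr Q = 0.
  by apply/eqP; move: p_ngt0; rewrite prob_aE lt0r psd_trace_ge0 // andbT negbK.
by rewrite (psd_trace_eq0 Q_psd trQ0) mulmx0 mul0mx mxE.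
Qed.

End ConditionalStates.

Theorem lemma2 (C : numClosedFieldType) (m n : nat)
  (rho : 'M[C]_(m * n)) (R : 'M[C]_m) :
  density rho ->
  unitary R ->
  (forall (U : 'M[C]_n), unitary U ->
     forall a : 'I_n, 0 < prob_a rho U a ->
       diag_in R (cond_state rho U a)) ->
  exists Ck : 'I_m -> 'M[C]_n,
    (forall k, psd (Ck k)) /\
    rho = \sum_(k < m) tensmx (projb R k) (Ck k).
Proof.
move=> [rho_psd _] R_unitary cond_diag.
pose W k : 'M[C]_(m * n, n) := tens_vecl (col k R).
exists (fun k => adjmx (W k) *m rho *m W k); split=> [k|]; first exact: psd_congr.
rewrite {1}(@sum_block_diag _ _ _ _ W (fun k => adjmx (W k)) rho).
- by apply: eq_bigr => k _; rewrite tens_vecl_conj.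
- by apply: sum_tens_vecl_outer; exact: mulmx1C.
- by move=> k l; exact: cond_diag_block_eq0.
Qed.
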